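(* Let $n\ge1$ and let $\pi\in\mathfrak{S}_n$ be a two-stack sortable permutation. Write $\pi=\pi_\ell\cdot(n)\cdot\pi_r$, where $\pi_\ell$ (resp. $\pi_r$) is the part of $\pi$ before (resp. after) the entry $n$, and let $\pi_1=P(\pi_\ell)$, $\pi_2=P(\pi_r)$. Then each of $\pi_1,\pi_2$ is either the empty permutation or a two-stack sortable permutation.
   Context: For a finite sequence $A$ of distinct integers, the stack-sorting operator $\mathcal{S}$ is defined by $\mathcal{S}(\epsilon)=\epsilon$ for the empty sequence and, if $A$ is non-empty with largest element $m$, writing $A=A_L\cdot(m)\cdot A_R$ (concatenation), $\mathcal{S}(A)=\mathcal{S}(A_L)\cdot\mathcal{S}(A_R)\cdot(m)$. A permutation $\sigma\in\mathfrak{S}_n$ ($n\ge1$), viewed as a sequence, is two-stack sortable if $\mathcal{S}(\mathcal{S}(\sigma))$ is the identity; the empty permutation is not considered two-stack sortable. For a sequence $A$ of distinct integers, $P(A)$ is its standardization: the permutation of $\{1,\dots,\operatorname{len}(A)\}$ having the same relative order as $A$ (with $P(\epsilon)=\epsilon$). *)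

From mathcomp Require Import all_boot.
Set Implicit Arguments. Unset Strict Implicit. Unset Printing Implicit Defensive.

(* Sequences of distinct integers are represented as [seq nat]
   (permutations of {1..n} have positive entries; standardizations likewise). *)

(* Stack-sorting operator with fuel (fuel >= size s suffices). *)
Fixpoint stack_sort_fuel (fuel : nat) (s : seq nat) : seq nat :=
  match fuel with
  | 0 => s
  | f.+1 =>
    match s with
    | [::] => [::]
    | x :: _ =>
      let m := foldr maxn 0 s in
      let i := index m s in
      stack_sort_fuel f (take i s) ++ stack_sort_fuel f (drop i.+1 s) ++ [:: m]
    end
  end.

Definition stack_sort (s : seq nat) : seq nat := stack_sort_fuel (size s) s.

Definition is_perm (n : nat) (s : seq nat) : bool := perm_eq s (iota 1 n).

Definition two_stack_sortable (s : seq nat) : Prop :=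
  0 < size s /\ is_perm (size s) s /\ stack_sort (stack_sort s) = iota 1 (size s).

Definition standardize (s : seq nat) : seq nat :=
  [seq (count (fun y => y < x) s).+1 | x <- s].

From mathcomp Require Import all_boot.
Set Implicit Arguments. Unset Strict Implicit. Unset Printing Implicit Defensive.

(* Writing pi = pi_l n pi_r with n maximal, S(pi) = S(pi_l) S(pi_r) n and hence
   S(S(pi)) = S(S(pi_l) S(pi_r)) n.  Call A stack-sortable when S(A) is
   increasing; this property passes from a concatenation A B to both A and B
   (induction along the decomposition at the maximum of A B), so S(pi_l) and
   S(pi_r) are stack-sortable, i.e. pi_l and pi_r are two-stack sortable as
   sequences.  Since S commutes with order-preserving relabellings, the same
   holds for their standardizations. *)

Lemma all_ltnW m s : all (ltn^~ m) s -> all (leq^~ m) s.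
Proof. by apply: sub_all => x /ltnW. Qed.

Lemma foldr_maxn_leq m s : (foldr maxn 0 s <= m) = all (leq^~ m) s.
Proof. by elim: s => //= x s IH; rewrite geq_max IH. Qed.

Lemma leq_foldr_maxn s x : x \in s -> x <= foldr maxn 0 s.
Proof. by move: x; apply/allP; rewrite -foldr_maxn_leq. Qed.

Lemma foldr_maxn_mem s : s != [::] -> foldr maxn 0 s \in s.
Proof.
elim: s => // x s IH _; rewrite /= inE; case: s IH => [|y s] IH.
  by rewrite maxn0 eqxx.
by rewrite /maxn; case: ltnP; rewrite ?eqxx ?IH ?orbT.
Qed.

Lemma stack_sort_fuel_cons f s : s != [::] ->
  let m := foldr maxn 0 s in
  stack_sort_fuel f.+1 s = stack_sort_fuel f (take (index m s) s)
    ++ stack_sort_fuel f (drop (index m s).+1 s) ++ [:: m].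
Proof. by case: s. Qed.

Lemma stack_sort_fuel_enough f g s : size s <= f -> size s <= g ->
  stack_sort_fuel f s = stack_sort_fuel g s.
Proof.
elim: f g s => [|f IH] [|g] [|x s] // sf sg; rewrite !stack_sort_fuel_cons //.
set t := x :: s in sf sg *; set i := index _ t.
have si : i < size t by rewrite index_mem foldr_maxn_mem.
have take_small : size (take i t) < size t by rewrite size_take si.
have drop_small : size (drop i.+1 t) < size t by rewrite size_drop subnSK // leq_subr.
by rewrite !(IH g) // -ltnS (leq_trans _ sf, leq_trans _ sg).
Qed.

(* [R] may contain [m] again: [index] locates the first occurrence of the maximum. *)
Lemma stack_sort_cat_max L m R : all (ltn^~ m) L -> all (leq^~ m) R ->
  stack_sort (L ++ m :: R) = stack_sort L ++ stack_sort R ++ [:: m].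
Proof.
move=> Lm Rm; set s := L ++ m :: R.
have mNL : m \notin L by apply/negP => /(allP Lm)/=; rewrite ltnn.
have max_s : foldr maxn 0 s = m.
  apply/eqP; rewrite eqn_leq leq_foldr_maxn ?mem_cat ?mem_head ?orbT // andbT.
  by rewrite foldr_maxn_leq all_cat /= leqnn Rm all_ltnW.
have size_s : size s = (size L + size R).+1 by rewrite size_cat addnS.
rewrite /stack_sort size_s stack_sort_fuel_cons -?size_eq0 ?size_s //.
rewrite max_s /s index_pivot // take_size_cat //.
rewrite drop_cat ltnNge leqnSn subSnn /= drop0.
by congr (_ ++ _ ++ _); apply: stack_sort_fuel_enough; rewrite ?leq_addr ?leq_addl.
Qed.

Lemma stack_sort_ind (P : seq nat -> Prop) :
  P [::] ->
  (forall L m R, all (ltn^~ m) L -> all (leq^~ m) R -> P L -> P R -> P (L ++ m :: R)) ->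
  forall s, P s.
Proof.
move=> P0 Pcat s; have [n] := ubnP (size s); elim: n s => // n IH s.
have [-> // | s0] := eqVneq s [::].
set m := foldr maxn 0 s; set i := index m s; set L := take i s; set R := drop i.+1 s.
have ms : m \in s by apply: foldr_maxn_mem.
have es : s = L ++ m :: R by rewrite /L /R -drop_index // cat_take_drop.
have mNL : m \notin L by rewrite /L in_take_leq ?index_size ?ltnn.
have Lm : all (ltn^~ m) L.
  apply/allP => x xL /=; rewrite ltn_neqAle leq_foldr_maxn; last by rewrite es mem_cat xL.
  by rewrite andbT; apply: contraNneq mNL => <-.
have Rm : all (leq^~ m) R.
  by apply/allP => x xR; rewrite leq_foldr_maxn // es mem_cat inE xR !orbT.
rewrite es size_cat /= addnS ltnS => sLR.
by apply: Pcat => //; apply: IH; rewrite (leq_ltn_trans _ sLR) ?leq_addr ?leq_addl.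
Qed.

Lemma perm_stack_sort s : perm_eq (stack_sort s) s.
Proof.
elim/stack_sort_ind: s => // L m R Lm Rm permL permR.
rewrite stack_sort_cat_max //; apply: perm_cat => //.
by rewrite cats1 perm_rcons perm_cons.
Qed.

Lemma stack_sort_map (f : nat -> nat) s : {in s &, {homo f : x y / x < y}} ->
  stack_sort (map f s) = map f (stack_sort s).
Proof.
elim/stack_sort_ind: s => // L m R Lm Rm IHL IHR f_homo.
have inL x : x \in L -> x \in L ++ m :: R by rewrite mem_cat => ->.
have inR x : x \in R -> x \in L ++ m :: R by rewrite mem_cat inE => ->; rewrite !orbT.
have m_in : m \in L ++ m :: R by rewrite mem_cat mem_head orbT.
have fLm : all (ltn^~ (f m)) (map f L).
  by apply/allP => _ /mapP[x xL ->]; exact: f_homo (inL _ xL) m_in (allP Lm x xL).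
have fRm : all (leq^~ (f m)) (map f R).
  apply/allP => _ /mapP[x xR ->] /=; have := allP Rm x xR; rewrite leq_eqVlt.
  by case/predU1P => [-> // | xm]; apply/ltnW/(f_homo _ _ (inR _ xR) m_in xm).
rewrite map_cat /= !stack_sort_cat_max // !map_cat IHL ?IHR //.
  by apply: sub_in2 f_homo; exact: inR.
by apply: sub_in2 f_homo; exact: inL.
Qed.

Definition stack_sortable (s : seq nat) : bool := pairwise ltn (stack_sort s).

Lemma stack_sortable_cat_max L m R : all (ltn^~ m) L -> all (leq^~ m) R ->
  stack_sortable (L ++ m :: R) =
  [&& stack_sortable L, stack_sortable R, allrel ltn L R & all (ltn^~ m) R].
Proof.
move=> Lm Rm; rewrite /stack_sortable stack_sort_cat_max // !pairwise_cat.
rewrite allrel_catr !allrel1r /= andbT.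
rewrite (perm_all _ (perm_stack_sort L)) (perm_all _ (perm_stack_sort R)) Lm.
rewrite (eq_allrel_mem2 _ (perm_mem (perm_stack_sort L)) (perm_mem (perm_stack_sort R))).
by rewrite andbT; case: (allrel _ _ _); case: (all _ R); do 2!case: (pairwise _ _).
Qed.

Lemma cat_eq_cat_cons (T : Type) (A B L R : seq T) (m : T) : A ++ B = L ++ m :: R ->
  (exists2 A2, A = L ++ m :: A2 & R = A2 ++ B) \/
  (exists2 B1, L = A ++ B1 & B = B1 ++ m :: R).
Proof.
elim: A L => [|a A IH] L /=; first by right; exists L.
case: L => [|l L] /= [<-]; first by left; exists A.
by case/IH => -[X -> ->]; [left | right]; exists X.
Qed.

Lemma stack_sortable_cat A B :
  stack_sortable (A ++ B) -> stack_sortable A && stack_sortable B.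
Proof.
move eAB: (A ++ B) => s; elim/stack_sort_ind: s A B eAB => [|L m R Lm Rm IHL IHR] A B.
  by case: A; case: B.
move=> eAB; case: (cat_eq_cat_cons eAB) => -[X eX eX']; subst;
  rewrite stack_sortable_cat_max // => /and4P[sL sR LR Rm'].
- have /andP[sX ->] := IHR X B (erefl _) sR.
  move: LR Rm'; rewrite allrel_catr all_cat => /andP[LX _] /andP[Xm _].
  by rewrite stack_sortable_cat_max ?sL ?sX ?LX ?Xm ?all_ltnW.
- have /andP[-> sX] := IHL A X (erefl _) sL.
  move: LR Lm; rewrite allrel_catl all_cat => /andP[_ XR] /andP[_ Xm].
  by rewrite stack_sortable_cat_max // sX sR XR Rm'.
Qed.

Definition rank (s : seq nat) (x : nat) : nat := (count (ltn^~ x) s).+1.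

Lemma standardizeE s : standardize s = map (rank s) s.
Proof. by []. Qed.

Lemma rank_homo s : {in s &, {homo rank s : x y / x < y}}.
Proof.
move=> x y xs _ xy; rewrite /rank ltnS; elim: s xs => //= z s IH /predU1P[<- | xs].
  rewrite ltnn xy add1n ltnS; apply: sub_count => w /= wx; exact: ltn_trans wx xy.
rewrite -addnS; apply: leq_add (IH xs).
by case: ltnP => [zx|//]; rewrite (ltn_trans zx xy).
Qed.

Lemma rank_le_size s x : x \in s -> rank s x <= size s.
Proof.
move=> xs; rewrite /rank ltn_neqAle count_size andbT -all_count.
by apply/allPn; exists x; rewrite //= ltnn.
Qed.

Lemma perm_standardize_iota s : uniq s -> perm_eq (standardize s) (iota 1 (size s)).
Proof.
move=> us; rewrite standardizeE.
have rank_inj : {in s &, injective (rank s)} by apply/incn_inj_in/leq_mono_in/rank_homo.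
have u_std : uniq (map (rank s) s) by rewrite map_inj_in_uniq.
have std_sub : {subset map (rank s) s <= iota 1 (size s)}.
  by move=> _ /mapP[x xs ->]; rewrite mem_iota add1n ltnS rank_le_size.
have [|_ std_eq] := uniq_min_size u_std std_sub; first by rewrite size_iota size_map.
by rewrite uniq_perm // iota_uniq.
Qed.

Lemma two_stack_sortable_standardize s : uniq s -> stack_sortable (stack_sort s) ->
  standardize s = [::] \/ two_stack_sortable (standardize s).
Proof.
move=> us ss; have [-> | s0] := eqVneq s [::]; [by left | right].
have size_std : size (standardize s) = size s by rewrite size_map.
have mem_SS : stack_sort (stack_sort s) =i s.
  by apply: perm_mem; rewrite !(permPl (perm_stack_sort _)).
have SS_std : stack_sort (stack_sort (standardize s)) =
              map (rank s) (stack_sort (stack_sort s)).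
  rewrite standardizeE (stack_sort_map (@rank_homo s)) stack_sort_map //.
  by apply: sub_in2 (@rank_homo s) => x; rewrite (perm_mem (perm_stack_sort s)).
split; first by rewrite size_std lt0n size_eq0.
rewrite /is_perm size_std perm_standardize_iota //; split=> //.
apply: (irr_sorted_eq ltn_trans ltnn) (iota_ltn_sorted _ _) _.
  rewrite SS_std; apply: (homo_sorted_in (@rank_homo s)).
    by apply/allP => x; rewrite mem_SS.
  by rewrite sorted_pairwise //; exact: ltn_trans.
by apply: perm_mem; rewrite !(permPl (perm_stack_sort _)) perm_standardize_iota.
Qed.

Lemma stack_sort2_cat_max L m R : all (ltn^~ m) (L ++ R) ->
  stack_sort (stack_sort (L ++ m :: R)) = stack_sort (stack_sort L ++ stack_sort R) ++ [:: m].
Proof.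
rewrite all_cat => /andP[Lm Rm].
rewrite stack_sort_cat_max ?all_ltnW // catA -[_ ++ [:: m]]cats0 -catA stack_sort_cat_max //.
by rewrite all_cat !(perm_all _ (perm_stack_sort _)) Lm.
Qed.

Lemma stack_sortable_stack_sort_sides L m R : all (ltn^~ m) (L ++ R) ->
  stack_sortable (stack_sort (L ++ m :: R)) ->
  stack_sortable (stack_sort L) && stack_sortable (stack_sort R).
Proof.
move=> LRm; rewrite /stack_sortable stack_sort2_cat_max // pairwise_cat.
by case/and3P=> _ /stack_sortable_cat.
Qed.

Lemma perm_iota_pivot n L R : perm_eq (L ++ n :: R) (iota 1 n) ->
  [/\ uniq L, uniq R & all (ltn^~ n) (L ++ R)].
Proof.
move=> perm_LnR; have := perm_uniq perm_LnR.
rewrite iota_uniq uniq_catC /= mem_cat orbC -mem_cat cat_uniq.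
case/andP=> nLR /and3P[uR _ uL]; split=> //.
have /allP le_n : all (leq^~ n) (L ++ n :: R).
  by rewrite (perm_all _ perm_LnR); apply/allP => x; rewrite mem_iota add1n ltnS => /andP[].
apply/allP => x xLR; rewrite /= ltn_neqAle le_n ?andbT.
  by apply: contraNneq nLR => <-.
by move: xLR; rewrite !mem_cat inE => /orP[] ->; rewrite ?orbT.
Qed.

Theorem proposition4 (n : nat) (pi : seq nat) :
  1 <= n -> size pi = n -> two_stack_sortable pi ->
  let pi_l := take (index n pi) pi in
  let pi_r := drop (index n pi).+1 pi in
  (standardize pi_l = [::] \/ two_stack_sortable (standardize pi_l)) /\
  (standardize pi_r = [::] \/ two_stack_sortable (standardize pi_r)).
Proof.
move=> n_gt0 size_pi [_ [pi_perm pi_SS]] L R.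
rewrite /is_perm size_pi in pi_perm pi_SS.
have n_pi : n \in pi by rewrite (perm_mem pi_perm) mem_iota add1n ltnS n_gt0 /=.
have e_pi : pi = L ++ n :: R by rewrite /L /R -drop_index // cat_take_drop.
rewrite e_pi in pi_perm pi_SS; have [uL uR LR_n] := perm_iota_pivot pi_perm.
have : stack_sortable (stack_sort (L ++ n :: R)).
  by rewrite /stack_sortable pi_SS -sorted_pairwise ?iota_ltn_sorted //; exact: ltn_trans.
case/(stack_sortable_stack_sort_sides LR_n)/andP => sL sR.
by split; apply: two_stack_sortable_standardize.
Qed.
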